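(* In the relatively free algebra $R=\mathbb{K}\langle Y\cup Z\rangle/I$, the image of every $Y$-proper polynomial is a linear combination of the images of polynomials $g_K=h(y_{i_1},\dots,y_{i_{2m+n}},z_{j_1},\dots,z_{j_{n+2r}})\,z_{k_1}\cdots z_{k_q}$ with $m,n,r,q\ge0$, $i_1<i_2<\dots<i_{2m+n}$, $j_1\le\dots\le j_{n+2r}$ and $k_1<\dots<k_q$.
   Context: $\mathbb{K}$ is an infinite field of characteristic different from $2$. $\mathbb{K}\langle Y\cup Z\rangle$ is the free associative algebra on disjoint countable sets $Y=\{y_1,y_2,\dots\}$ (degree $0$) and $Z=\{z_1,z_2,\dots\}$ (degree $1$). Notation: $[a,b]=ab-ba$, $[a_1,\dots,a_n]=[[a_1,\dots,a_{n-1}],a_n]$, $a\circ b=ab+ba$. A polynomial is $Y$-proper if it lies in the subalgebra of $\mathbb{K}\langle Y\cup Z\rangle$ generated by $Z$ and all commutators $[x_1,\dots,x_s]$, $s\ge2$, of variables $x_i\in Y\cup Z$. A $T_2$-ideal is an ideal of $\mathbb{K}\langle Y\cup Z\rangle$ stable under all graded endomorphisms (those sending each $y_i$ to a polynomial of degree $0$ and each $z_i$ to one of degree $1$). $I$ is the $T_2$-ideal generated by: (1) $[y_1,y_2,y_3]$, $[y_1,y_2,z_3]$; (2) $[y_1,z_2,y_3]$; (3) $[y_1,z_2]\circ z_3$; (4) $[z_1\circ z_2,z_3]$; (5) $(z_1\circ z_2)(z_3\circ z_4)-(z_1\circ z_3)(z_2\circ z_4)$; (6) $[x_1,y_2][y_3,x_4]+[x_1,y_3][y_2,x_4]$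 for all choices $x_1\in\{y_1,z_1\}$, $x_4\in\{y_4,z_4\}$; (7) $[y_1,z_2](z_3\circ z_4)-[y_1,z_3](z_2\circ z_4)$. For indices as indicated, $h(y_{i_1},\dots,y_{i_{2m+n}},z_{j_1},\dots,z_{j_{n+2r}})=[y_{i_1},y_{i_2}]\cdots[y_{i_{2m-1}},y_{i_{2m}}]\cdot[y_{i_{2m+1}},z_{j_1}]\cdots[y_{i_{2m+n}},z_{j_n}]\cdot(z_{j_{n+1}}\circ z_{j_{n+2}})\cdots(z_{j_{n+2r-1}}\circ z_{j_{n+2r}})$ (empty products equal $1$). *)

(* Free associative algebra K<Y u Z> built concretely:
   a polynomial is a finite formal sum (list of (coefficient, word) pairs);
   two lists denote the same algebra element iff they have the same
   coefficient function [coef] (relation [peq]). All sets of algebra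
   elements below (the T2-ideal I, the Y-proper polynomials) are closed
   under [peq], i.e. they are genuinely sets of algebra elements. *)
From HB Require Import structures.
From Stdlib Require List.
From mathcomp Require Import all_boot all_algebra.
Set Implicit Arguments. Unset Strict Implicit. Unset Printing Implicit Defensive.
Import GRing.Theory.
Local Open Scope ring_scope.

(* A variable: (false, i) is y_i (degree 0), (true, i) is z_i (degree 1). *)
Definition var := (bool * nat)%type.

Section FreeAlg.
Variable K : fieldType.

Definition fpoly := seq (K * seq var).

Definition coef (p : fpoly) (w : seq var) : K := \sum_(t <- p | t.2 == w) t.1.
Definition peq (p q : fpoly) : Prop := forall w, coef p w = coef q w.

Definition pzero : fpoly := [::].
Definition pone : fpoly := [:: (1, [::])].
Definition pvar (x : var) : fpoly := [:: (1, [:: x])].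
Definition padd (p q : fpoly) : fpoly := p ++ q.
Definition pscale (c : K) (p : fpoly) : fpoly := [seq (c * t.1, t.2) | t <- p].
Definition psub (p q : fpoly) : fpoly := padd p (pscale (-1) q).
Definition pmul (p q : fpoly) : fpoly := [seq (a.1 * b.1, a.2 ++ b.2) | a <- p, b <- q].
Definition pprod (s : seq fpoly) : fpoly := foldr pmul pone s.
Definition psum (s : seq fpoly) : fpoly := foldr padd pzero s.

Definition comm (p q : fpoly) : fpoly := psub (pmul p q) (pmul q p).
Definition jordan (p q : fpoly) : fpoly := padd (pmul p q) (pmul q p).

Definition y (i : nat) : fpoly := pvar (false, i).
Definition z (i : nat) : fpoly := pvar (true, i).

Definition lcomm (x : var) (xs : seq var) : fpoly :=
  foldl (fun a b => comm a (pvar b)) (pvar x) xs.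

Definition eval (phi : var -> fpoly) (p : fpoly) : fpoly :=
  psum [seq pscale t.1 (pprod (map phi t.2)) | t <- p].

Definition wdeg (w : seq var) : nat := (count (fun x : var => x.1) w %% 2)%N.
Definition homog (d : nat) (p : fpoly) : Prop :=
  forall w, coef p w != 0 -> wdeg w = d.
Definition graded_endo (phi : var -> fpoly) : Prop :=
  forall x : var, homog (nat_of_bool x.1) (phi x).

Definition gens : seq fpoly :=
  [:: comm (comm (y 1) (y 2)) (y 3);
      comm (comm (y 1) (y 2)) (z 3);
      comm (comm (y 1) (z 2)) (y 3);
      jordan (comm (y 1) (z 2)) (z 3);
      comm (jordan (z 1) (z 2)) (z 3);
      psub (pmul (jordan (z 1) (z 2)) (jordan (z 3) (z 4)))
           (pmul (jordan (z 1) (z 3)) (jordan (z 2) (z 4)))] ++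
  [seq padd (pmul (comm x1 (y 2)) (comm (y 3) x4))
            (pmul (comm x1 (y 3)) (comm (y 2) x4))
     | x1 <- [:: y 1; z 1], x4 <- [:: y 4; z 4]] ++
  [:: psub (pmul (comm (y 1) (z 2)) (jordan (z 3) (z 4)))
           (pmul (comm (y 1) (z 3)) (jordan (z 2) (z 4)))].

Inductive inI : fpoly -> Prop :=
| I_gen g : List.In g gens -> inI g
| I_peq p q : inI p -> peq p q -> inI q
| I_zero : inI pzero
| I_add p q : inI p -> inI q -> inI (padd p q)
| I_scale c p : inI p -> inI (pscale c p)
| I_mull a p : inI p -> inI (pmul a p)
| I_mulr p a : inI p -> inI (pmul p a)
| I_endo phi p : graded_endo phi -> inI p -> inI (eval phi p).

Inductive Yproper : fpoly -> Prop :=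
| YP_one : Yproper pone
| YP_z i : Yproper (z i)
| YP_comm x xs : (1 <= size xs)%N -> Yproper (lcomm x xs)
| YP_peq p q : Yproper p -> peq p q -> Yproper q
| YP_add p q : Yproper p -> Yproper q -> Yproper (padd p q)
| YP_scale c p : Yproper p -> Yproper (pscale c p)
| YP_mul p q : Yproper p -> Yproper q -> Yproper (pmul p q).

End FreeAlg.

Record gdata := GData {
  gm : nat; gn : nat; gr : nat; gq : nat;
  gi : seq nat; gj : seq nat; gk : seq nat }.

Definition admissible (d : gdata) : Prop :=
  size (gi d) = (2 * gm d + gn d)%N /\ sorted ltn (gi d) /\
  size (gj d) = (gn d + 2 * gr d)%N /\ sorted leq (gj d) /\
  size (gk d) = gq d /\ sorted ltn (gk d).

Section GK.
Variable K : fieldType.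

(* h(y_{i_1},...,y_{i_{2m+n}}, z_{j_1},...,z_{j_{n+2r}}) (0-based positions) *)
Definition hpoly (d : gdata) : fpoly K :=
  let ii := gi d in let jj := gj d in
  pmul (pprod [seq comm (y K (nth 0 ii (2 * a))) (y K (nth 0 ii (2 * a).+1))
              | a <- iota 0 (gm d)])
  (pmul (pprod [seq comm (y K (nth 0 ii (2 * gm d + b))) (z K (nth 0 jj b))
               | b <- iota 0 (gn d)])
        (pprod [seq jordan (z K (nth 0 jj (gn d + 2 * c)))
                           (z K (nth 0 jj (gn d + 2 * c).+1))
               | c <- iota 0 (gr d)])).

Definition gK (d : gdata) : fpoly K :=
  pmul (hpoly d) (pprod [seq z K k | k <- gk d]).
End GK.

(* In R = K<Y u Z>/I the generators of I say that [y,y] commutes with every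
   variable, [y,z] commutes with the y's and anticommutes with the z's, and
   z o z commutes with the z's; relations (5)-(7) exchange indices between
   neighbouring factors of h, antisymmetrically in the i's and symmetrically
   in the j's.  Hence (char K <> 2) the span of the g_K contains 1 and is
   stable under left multiplication by [y_a,y_b], [y_a,z_b] and z_c: a
   commutator is absorbed into h and the indices are re-sorted, while z_c is
   moved past h (picking up a sign) and inserted into the increasing z-word
   via z_c z_k = z_c o z_k - z_k z_c and z_c z_c = (z_c o z_c)/2.  Every
   Y-proper polynomial lies in the algebra generated by these elements, since
   the commutator of such an element with a variable lies there again. *)

From Stdlib Require List.
From Stdlib Require Import ClassicalEpsilon.
From HB Require Import structures.
From mathcomp Require Import all_boot all_algebra ring zify.
Set Implicit Arguments. Unset Strict Implicit. Unset Printing Implicit Defensive.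
Import GRing.Theory.
Local Open Scope ring_scope.

Section FreeAlgebra.
Variable K : fieldType.
Local Notation fpoly := (fpoly K).
Implicit Types p q r : fpoly.

Lemma coef_cat p q w : coef (p ++ q) w = coef p w + coef q w.
Proof. by rewrite /coef big_cat. Qed.

Lemma coef_nil w : coef (pzero K) w = 0.
Proof. by rewrite /coef big_nil. Qed.

Lemma coefE p w : coef p w = \sum_(t <- p) (if t.2 == w then t.1 else 0).
Proof. by rewrite /coef big_mkcond. Qed.

Lemma coef_scale c p w : coef (pscale c p) w = c * coef p w.
Proof.
rewrite !coefE /pscale big_map mulr_sumr; apply: eq_bigr => t _ /=.
by case: ifP; rewrite ?mulr0.
Qed.

Lemma coef_mul p q w : coef (pmul p q) w =
  \sum_(a <- p) \sum_(b <- q) (if a.2 ++ b.2 == w then a.1 * b.1 else 0).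
Proof. by rewrite coefE /pmul big_allpairs_dep. Qed.

Lemma peq_trans p q r : peq p q -> peq q r -> peq p r.
Proof. by move=> E1 E2 w; rewrite E1. Qed.

Lemma peq_add p p' q q' : peq p p' -> peq q q' -> peq (padd p q) (padd p' q').
Proof. by move=> E1 E2 w; rewrite !coef_cat E1 E2. Qed.

Lemma pmulA p q r : peq (pmul (pmul p q) r) (pmul p (pmul q r)).
Proof.
move=> w; rewrite coef_mul /pmul big_allpairs_dep coef_mul.
apply: eq_bigr => a _; rewrite big_allpairs_dep; apply: eq_bigr => b _.
by apply: eq_bigr => c _ /=; rewrite catA mulrA.
Qed.

Lemma pmulDl p q r : peq (pmul (padd p q) r) (padd (pmul p r) (pmul q r)).
Proof. by move=> w; rewrite coef_cat !coef_mul big_cat. Qed.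

Lemma pmulDr p q r : peq (pmul p (padd q r)) (padd (pmul p q) (pmul p r)).
Proof.
move=> w; rewrite coef_cat !coef_mul -big_split.
by apply: eq_bigr => a _; rewrite big_cat.
Qed.

Lemma pmul1l p : peq (pmul (pone K) p) p.
Proof.
move=> w; rewrite coef_mul big_cons big_nil addr0 coefE.
by apply: eq_bigr => b _ /=; rewrite mul1r.
Qed.

Lemma pmul1r p : peq (pmul p (pone K)) p.
Proof.
move=> w; rewrite coef_mul coefE; apply: eq_bigr => b _ /=.
by rewrite big_cons big_nil addr0 cats0 mulr1.
Qed.

Lemma pmulZl c p q : peq (pmul (pscale c p) q) (pscale c (pmul p q)).
Proof.
move=> w; rewrite coef_scale !coef_mul big_map mulr_sumr; apply: eq_bigr => a _.
rewrite mulr_sumr; apply: eq_bigr => b _ /=.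
by case: ifP; rewrite ?mulr0 // mulrA.
Qed.

Lemma pmulZr c p q : peq (pmul p (pscale c q)) (pscale c (pmul p q)).
Proof.
move=> w; rewrite coef_scale !coef_mul mulr_sumr; apply: eq_bigr => a _.
rewrite big_map mulr_sumr; apply: eq_bigr => b _ /=.
by case: ifP; rewrite ?mulr0 // mulrCA.
Qed.

Lemma pscaleA a b p : peq (pscale a (pscale b p)) (pscale (a * b) p).
Proof. by move=> w; rewrite !coef_scale mulrA. Qed.

Lemma pscale1 p : peq (pscale 1 p) p.
Proof. by move=> w; rewrite coef_scale mul1r. Qed.

Lemma pscaleDr c p q : peq (pscale c (padd p q)) (padd (pscale c p) (pscale c q)).
Proof. by move=> w; rewrite !(coef_scale, coef_cat) mulrDr. Qed.

Lemma pscaleDl a b p : peq (pscale (a + b) p) (padd (pscale a p) (pscale b p)).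
Proof. by move=> w; rewrite !(coef_scale, coef_cat) mulrDl. Qed.

End FreeAlgebra.

Section Quotient.
Variable K : fieldType.
Local Notation fpoly := (fpoly K).
Implicit Types p q r : fpoly.

Definition eqI p q := inI (psub p q).

Ltac coef_ring := move=> ?; rewrite ?(coef_cat, coef_scale, coef_nil); ring.

Lemma peq_eqI p q : peq p q -> eqI p q.
Proof.
move=> E; apply: (I_peq (I_zero K)) => w.
by rewrite !(coef_cat, coef_scale, coef_nil) E; ring.
Qed.

Lemma eqI_refl p : eqI p p.
Proof. exact: peq_eqI. Qed.

Lemma eqI_sym p q : eqI p q -> eqI q p.
Proof. by move=> E; apply: (I_peq (I_scale (-1) E)); coef_ring. Qed.

Lemma eqI_trans p q r : eqI p q -> eqI q r -> eqI p r.
Proof. by move=> E1 E2; apply: (I_peq (I_add E1 E2)); coef_ring. Qed.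

Lemma eqI_add p p' q q' : eqI p p' -> eqI q q' -> eqI (padd p q) (padd p' q').
Proof. by move=> E1 E2; apply: (I_peq (I_add E1 E2)); coef_ring. Qed.

Lemma eqI_scale c p p' : eqI p p' -> eqI (pscale c p) (pscale c p').
Proof. by move=> E; apply: (I_peq (I_scale c E)); coef_ring. Qed.

Lemma eqI_mul p p' q q' : eqI p p' -> eqI q q' -> eqI (pmul p q) (pmul p' q').
Proof.
move=> Ep Eq; apply: eqI_trans (_ : eqI _ (pmul p' q)) _.
  apply: (I_peq (I_mulr q Ep)); apply: peq_trans (pmulDl _ _ _) _.
  exact: peq_add (pmulZl _ _ _).
apply: (I_peq (I_mull p' Eq)); apply: peq_trans (pmulDr _ _ _) _.
exact: peq_add (pmulZr _ _ _).
Qed.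

(* [eqI] is only a Prop, so representatives are chosen classically. *)
Definition eqIb p q : bool := if excluded_middle_informative (eqI p q) then true else false.

Lemma eqIbP p q : reflect (eqI p q) (eqIb p q).
Proof. by rewrite /eqIb; case: excluded_middle_informative => H; constructor. Qed.

Definition canon p := choose (eqIb p) p.

Lemma canon_eqI p : eqI p (canon p).
Proof. by apply/eqIbP; apply: chooseP; apply/eqIbP; apply: eqI_refl. Qed.

Lemma canon_eq p q : eqI p q -> canon p = canon q.
Proof.
move=> E; rewrite /canon (@eq_choose _ (eqIb p) (eqIb q)).
  by apply: choose_id; apply/eqIbP; [apply: eqI_sym | apply: eqI_refl].
move=> r; apply/eqIbP/eqIbP => H; first exact: eqI_trans (eqI_sym E) H.
exact: eqI_trans E H.
Qed.

Definition relfree := {p : fpoly | canon p == p}.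

Definition rproj_def p : relfree :=
  exist _ (canon p) (introT eqP (canon_eq (eqI_sym (canon_eqI p)))).
Definition rproj := locked rproj_def.

Lemma rprojK p : eqI (sval (rproj p)) p.
Proof. by rewrite /rproj -lock; exact: eqI_sym (canon_eqI p). Qed.

Lemma rproj_val (a : relfree) : rproj (sval a) = a.
Proof. by case: a => p h; apply/val_inj; rewrite /rproj -lock; exact/eqP. Qed.

Lemma rproj_eqP p q : rproj p = rproj q <-> eqI p q.
Proof.
split=> [E|E]; last by apply/val_inj; rewrite /rproj -lock /=; exact: canon_eq.
by apply: eqI_trans (eqI_sym (rprojK p)) _; rewrite E; exact: rprojK.
Qed.

Lemma rproj_ind (P : relfree -> Prop) : (forall p, P (rproj p)) -> forall a, P a.
Proof. by move=> H a; rewrite -(rproj_val a). Qed.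

Lemma rproj_peq p q : peq p q -> rproj p = rproj q.
Proof. by move=> E; apply/rproj_eqP; apply: peq_eqI. Qed.

Definition radd (a b : relfree) := rproj (padd (sval a) (sval b)).
Definition ropp (a : relfree) := rproj (pscale (-1) (sval a)).
Definition rmul (a b : relfree) := rproj (pmul (sval a) (sval b)).
Definition rscale (c : K) (a : relfree) := rproj (pscale c (sval a)).

Lemma raddE p q : radd (rproj p) (rproj q) = rproj (padd p q).
Proof. by apply/rproj_eqP; apply: eqI_add; apply: rprojK. Qed.
Lemma roppE p : ropp (rproj p) = rproj (pscale (-1) p).
Proof. by apply/rproj_eqP; apply: eqI_scale; apply: rprojK. Qed.
Lemma rmulE p q : rmul (rproj p) (rproj q) = rproj (pmul p q).
Proof. by apply/rproj_eqP; apply: eqI_mul; apply: rprojK. Qed.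
Lemma rscaleE c p : rscale c (rproj p) = rproj (pscale c p).
Proof. by apply/rproj_eqP; apply: eqI_scale; apply: rprojK. Qed.

Ltac rproj_peq_by L := first [apply: rproj_peq; apply: L | apply: esym; apply: rproj_peq; apply: L].

Lemma raddA : associative radd.
Proof. by do 3!elim/rproj_ind=> ?; rewrite !raddE; apply: rproj_peq; coef_ring. Qed.
Lemma raddC : commutative radd.
Proof. by do 2!elim/rproj_ind=> ?; rewrite !raddE; apply: rproj_peq; coef_ring. Qed.
Lemma radd0 : left_id (rproj (pzero K)) radd.
Proof. by elim/rproj_ind=> p; rewrite raddE. Qed.
Lemma raddN : left_inverse (rproj (pzero K)) ropp radd.
Proof. by elim/rproj_ind=> p; rewrite roppE raddE; apply: rproj_peq; coef_ring. Qed.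

HB.instance Definition _ := Choice.on relfree.
HB.instance Definition _ := GRing.isZmodule.Build relfree raddA raddC radd0 raddN.

Lemma rmulA : associative rmul.
Proof. by do 3!elim/rproj_ind=> ?; rewrite !rmulE; rproj_peq_by pmulA. Qed.
Lemma rmul1l : left_id (rproj (pone K)) rmul.
Proof. by elim/rproj_ind=> p; rewrite rmulE; rproj_peq_by pmul1l. Qed.
Lemma rmul1r : right_id (rproj (pone K)) rmul.
Proof. by elim/rproj_ind=> p; rewrite rmulE; rproj_peq_by pmul1r. Qed.
Lemma rmulDl : left_distributive rmul radd.
Proof. by do 3!elim/rproj_ind=> ?; rewrite !(rmulE, raddE); rproj_peq_by pmulDl. Qed.
Lemma rmulDr : right_distributive rmul radd.
Proof. by do 3!elim/rproj_ind=> ?; rewrite !(rmulE, raddE); rproj_peq_by pmulDr. Qed.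

HB.instance Definition _ :=
  GRing.Zmodule_isPzRing.Build relfree rmulA rmul1l rmul1r rmulDl rmulDr.

Lemma rscaleA a b v : rscale a (rscale b v) = rscale (a * b) v.
Proof. by elim/rproj_ind: v => p; rewrite !rscaleE; rproj_peq_by pscaleA. Qed.
Lemma rscale1 : left_id 1 rscale.
Proof. by elim/rproj_ind=> p; rewrite rscaleE; rproj_peq_by pscale1. Qed.
Lemma rscaleDr : right_distributive rscale radd.
Proof. by move=> c; do 2!elim/rproj_ind=> ?; rewrite !(rscaleE, raddE); rproj_peq_by pscaleDr. Qed.
Lemma rscaleDl v : {morph rscale^~ v : a b / a + b >-> radd a b}.
Proof. by elim/rproj_ind: v => p a b; rewrite !(rscaleE, raddE); rproj_peq_by pscaleDl. Qed.

HB.instance Definition _ :=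
  GRing.Zmodule_isLmodule.Build K relfree rscaleA rscale1 rscaleDr rscaleDl.

Lemma rprojD p q : rproj (padd p q) = rproj p + rproj q.
Proof. exact: (esym (raddE p q)). Qed.
Lemma rprojM p q : rproj (pmul p q) = rproj p * rproj q.
Proof. exact: (esym (rmulE p q)). Qed.
Lemma rprojZ c p : rproj (pscale c p) = c *: rproj p.
Proof. exact: (esym (rscaleE c p)). Qed.
Lemma rprojB p q : rproj (psub p q) = rproj p - rproj q.
Proof. by rewrite /psub rprojD rprojZ scaleN1r. Qed.

Lemma rscalerAl c (a b : relfree) : c *: (a * b) = (c *: a) * b.
Proof.
elim/rproj_ind: a => p; elim/rproj_ind: b => q.
by rewrite -[c *: rproj p]rprojZ -!rprojM -rprojZ; rproj_peq_by pmulZl.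
Qed.

Lemma rscalerAr c (a b : relfree) : c *: (a * b) = a * (c *: b).
Proof.
elim/rproj_ind: a => p; elim/rproj_ind: b => q.
by rewrite -[c *: rproj q]rprojZ -!rprojM -rprojZ; rproj_peq_by pmulZr.
Qed.

Lemma rproj_inI p : inI p -> rproj p = 0.
Proof. by move=> h; apply/rproj_eqP; apply: (I_peq h); coef_ring. Qed.

Lemma rproj_pprod (l : seq fpoly) : rproj (pprod l) = \prod_(f <- l) rproj f.
Proof. by elim: l => [|f l IH]; rewrite ?big_nil ?big_cons //= rprojM IH. Qed.

Lemma rproj_psum (l : seq fpoly) : rproj (psum l) = \sum_(p <- l) rproj p.
Proof. by elim: l => [|p l IH]; rewrite ?big_nil ?big_cons //= rprojD IH. Qed.

End Quotient.

Section Relations.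
Variable K : fieldType.
Local Notation fpoly := (fpoly K).
Local Notation R := (relfree K).
Implicit Types p q : fpoly.

Definition rename_var (fy fz : nat -> nat) (x : var) : var :=
  (x.1, if x.1 then fz x.2 else fy x.2).

Definition rename fy fz p : fpoly := [seq (t.1, map (rename_var fy fz) t.2) | t <- p].

Lemma rename_add fy fz p q : rename fy fz (padd p q) = padd (rename fy fz p) (rename fy fz q).
Proof. by rewrite /rename /padd map_cat. Qed.

Lemma rename_scale fy fz c p : rename fy fz (pscale c p) = pscale c (rename fy fz p).
Proof. by rewrite /rename /pscale -!map_comp. Qed.

Lemma rename_mul fy fz p q : rename fy fz (pmul p q) = pmul (rename fy fz p) (rename fy fz q).
Proof.
rewrite /rename /pmul; elim: p => //= a p IH; rewrite map_cat IH -!map_comp.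
by congr (_ ++ _); apply: eq_map => b /=; rewrite map_cat.
Qed.

Lemma rename_sub fy fz p q : rename fy fz (psub p q) = psub (rename fy fz p) (rename fy fz q).
Proof. by rewrite /psub rename_add rename_scale. Qed.

Lemma rename_comm fy fz p q : rename fy fz (comm p q) = comm (rename fy fz p) (rename fy fz q).
Proof. by rewrite /comm rename_sub !rename_mul. Qed.

Lemma rename_jordan fy fz p q :
  rename fy fz (jordan p q) = jordan (rename fy fz p) (rename fy fz q).
Proof. by rewrite /jordan rename_add !rename_mul. Qed.

Lemma eval_rename fy fz p : eval (fun x => pvar K (rename_var fy fz x)) p = rename fy fz p.
Proof.
have pprod_var w : pprod (map (fun x => pvar K (rename_var fy fz x)) w) =
                   [:: (1, map (rename_var fy fz) w)].
  by elim: w => //= x w ->; rewrite /pmul /= mul1r.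
by rewrite /eval; elim: p => //= t p IH; rewrite pprod_var /= mulr1 /padd /= IH.
Qed.

Lemma graded_rename fy fz : graded_endo (fun x => pvar K (rename_var fy fz x)).
Proof.
move=> [b i] w; rewrite /coef big_cons big_nil /=.
case E: (_ == w); last by rewrite eqxx.
by move/eqP: E => <- _; rewrite /wdeg /rename_var /=; case: b.
Qed.

Lemma inI_rename fy fz g : inI g -> inI (rename fy fz g).
Proof. by move=> h; rewrite -eval_rename; apply: I_endo => //; apply: graded_rename. Qed.

Definition Y i : R := rproj (y K i).
Definition Z i : R := rproj (z K i).
Definition rcomm (a b : R) := a * b - b * a.
Definition rjordan (a b : R) := a * b + b * a.

Lemma rproj_comm p q : rproj (comm p q) = rcomm (rproj p) (rproj q).
Proof. by rewrite /comm rprojB !rprojM. Qed.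

Lemma rproj_jordan p q : rproj (jordan p q) = rjordan (rproj p) (rproj q).
Proof. by rewrite /jordan rprojD !rprojM. Qed.

Lemma rproj_gen_rename fy fz g : List.In g (gens K) -> rproj (rename fy fz g) = 0.
Proof. by move=> h; apply: rproj_inI; apply: inI_rename; apply: I_gen. Qed.

(* The generators use the indices 1..4; [idx4 a b c d] sends them to a, b, c, d. *)
Definition idx4 a b c d := fun i : nat => nth 0%N [:: 0%N; a; b; c; d] i.

Ltac gen_relation g a b c d a' b' c' d' :=
  have := @rproj_gen_rename (idx4 a b c d) (idx4 a' b' c' d') g ltac:(rewrite /gens /=; tauto);
  rewrite ?(rename_comm, rename_jordan, rename_sub, rename_add, rename_mul)
    ?(rproj_comm, rproj_jordan, rprojB, rprojD, rprojM);
  cbv beta iota delta [idx4 nth].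

Lemma commYY_Y a b c : rcomm (rcomm (Y a) (Y b)) (Y c) = 0.
Proof. by gen_relation (comm (comm (y K 1) (y K 2)) (y K 3)) a b c 0%N 0%N 0%N 0%N 0%N. Qed.

Lemma commYY_Z a b c : rcomm (rcomm (Y a) (Y b)) (Z c) = 0.
Proof. by gen_relation (comm (comm (y K 1) (y K 2)) (z K 3)) a b 0%N 0%N 0%N 0%N c 0%N. Qed.

Lemma commYZ_Y a b c : rcomm (rcomm (Y a) (Z b)) (Y c) = 0.
Proof. by gen_relation (comm (comm (y K 1) (z K 2)) (y K 3)) a 0%N c 0%N 0%N b 0%N 0%N. Qed.

Lemma jordanYZ_Z a b c : rjordan (rcomm (Y a) (Z b)) (Z c) = 0.
Proof. by gen_relation (jordan (comm (y K 1) (z K 2)) (z K 3)) a 0%N 0%N 0%N 0%N b c 0%N. Qed.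

Lemma commZZ_Z a b c : rcomm (rjordan (Z a) (Z b)) (Z c) = 0.
Proof. by gen_relation (comm (jordan (z K 1) (z K 2)) (z K 3)) 0%N 0%N 0%N 0%N a b c 0%N. Qed.

Lemma jordanZZ_exchange a b c d :
  rjordan (Z a) (Z b) * rjordan (Z c) (Z d) = rjordan (Z a) (Z c) * rjordan (Z b) (Z d).
Proof.
gen_relation (psub (pmul (jordan (z K 1) (z K 2)) (jordan (z K 3) (z K 4)))
                   (pmul (jordan (z K 1) (z K 3)) (jordan (z K 2) (z K 4))))
  0%N 0%N 0%N 0%N a b c d.
by move/eqP; rewrite subr_eq0 => /eqP.
Qed.

Lemma commYY_exchange a b c d :
  rcomm (Y a) (Y b) * rcomm (Y c) (Y d) = - (rcomm (Y a) (Y c) * rcomm (Y b) (Y d)).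
Proof.
gen_relation (padd (pmul (comm (y K 1) (y K 2)) (comm (y K 3) (y K 4)))
                   (pmul (comm (y K 1) (y K 3)) (comm (y K 2) (y K 4))))
  a b c d 0%N 0%N 0%N 0%N.
by move/eqP; rewrite addr_eq0 => /eqP.
Qed.

Lemma commYY_YZ_exchange a b c d :
  rcomm (Y a) (Y b) * rcomm (Y c) (Z d) = - (rcomm (Y a) (Y c) * rcomm (Y b) (Z d)).
Proof.
gen_relation (padd (pmul (comm (y K 1) (y K 2)) (comm (y K 3) (z K 4)))
                   (pmul (comm (y K 1) (y K 3)) (comm (y K 2) (z K 4))))
  a b c 0%N 0%N 0%N 0%N d.
by move/eqP; rewrite addr_eq0 => /eqP.
Qed.

Lemma commZY_YZ_exchange a b c d :
  rcomm (Z a) (Y b) * rcomm (Y c) (Z d) = - (rcomm (Z a) (Y c) * rcomm (Y b) (Z d)).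
Proof.
gen_relation (padd (pmul (comm (z K 1) (y K 2)) (comm (y K 3) (z K 4)))
                   (pmul (comm (z K 1) (y K 3)) (comm (y K 2) (z K 4))))
  0%N b c 0%N a 0%N 0%N d.
by move/eqP; rewrite addr_eq0 => /eqP.
Qed.

Lemma commYZ_jordan_exchange a b c d :
  rcomm (Y a) (Z b) * rjordan (Z c) (Z d) = rcomm (Y a) (Z c) * rjordan (Z b) (Z d).
Proof.
gen_relation (psub (pmul (comm (y K 1) (z K 2)) (jordan (z K 3) (z K 4)))
                   (pmul (comm (y K 1) (z K 3)) (jordan (z K 2) (z K 4))))
  a 0%N 0%N 0%N 0%N b c d.
by move/eqP; rewrite subr_eq0 => /eqP.
Qed.

End Relations.

Section Consequences.
Variable K : fieldType.
Local Notation R := (relfree K).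
Local Notation Y := (@Y K).
Local Notation Z := (@Z K).

Lemma rcommN (a b : R) : rcomm a b = - rcomm b a.
Proof. by rewrite /rcomm opprB. Qed.

Lemma rjordanC (a b : R) : rjordan a b = rjordan b a.
Proof. by rewrite /rjordan addrC. Qed.

Lemma rcomm_eq0 (a b : R) : rcomm a b = 0 -> a * b = b * a.
Proof. by move/eqP; rewrite subr_eq0 => /eqP. Qed.

Lemma rjordan_eq0 (a b : R) : rjordan a b = 0 -> a * b = - (b * a).
Proof. by move/eqP; rewrite addr_eq0 => /eqP. Qed.

Lemma YY_Y_commute a b c : rcomm (Y a) (Y b) * Y c = Y c * rcomm (Y a) (Y b).
Proof. exact/rcomm_eq0/commYY_Y. Qed.

Lemma YY_Z_commute a b c : rcomm (Y a) (Y b) * Z c = Z c * rcomm (Y a) (Y b).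
Proof. exact/rcomm_eq0/commYY_Z. Qed.

Lemma YZ_Y_commute a b c : rcomm (Y a) (Z b) * Y c = Y c * rcomm (Y a) (Z b).
Proof. exact/rcomm_eq0/commYZ_Y. Qed.

Lemma YZ_Z_anticommute a b c : rcomm (Y a) (Z b) * Z c = - (Z c * rcomm (Y a) (Z b)).
Proof. exact/rjordan_eq0/jordanYZ_Z. Qed.

Lemma ZZ_Z_commute a b c : rjordan (Z a) (Z b) * Z c = Z c * rjordan (Z a) (Z b).
Proof. exact/rcomm_eq0/commZZ_Z. Qed.

Lemma YY_YZ_commute a b c d : GRing.comm (rcomm (Y a) (Y b)) (rcomm (Y c) (Z d)).
Proof. by apply: commrB; apply: commrM; rewrite /GRing.comm ?YY_Y_commute ?YY_Z_commute. Qed.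

Lemma YZ_YZ_anticommute a b c d :
  rcomm (Y a) (Z b) * rcomm (Y c) (Z d) = - (rcomm (Y c) (Z d) * rcomm (Y a) (Z b)).
Proof.
have hY := YZ_Y_commute a b c; have hZ := YZ_Z_anticommute a b d.
move: hY hZ; set A := rcomm (Y a) (Z b); clearbody A => hY hZ.
rewrite /rcomm mulrBr mulrBl !mulrA hY hZ -[Y c * A * Z d]mulrA hZ.
by rewrite mulrN mulNr opprK -[Z d * A * Y c]mulrA hY !mulrA opprB addrC.
Qed.

Lemma commYZ_exchangeY a b c d :
  rcomm (Y a) (Z b) * rcomm (Y c) (Z d) = - (rcomm (Y c) (Z b) * rcomm (Y a) (Z d)).
Proof.
have := commZY_YZ_exchange K b a c d.
rewrite (rcommN (Z b) (Y a)) (rcommN (Z b) (Y c)) !mulNr.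
exact: oppr_inj.
Qed.

Lemma commYZ_exchangeZ a b c d :
  rcomm (Y a) (Z b) * rcomm (Y c) (Z d) = rcomm (Y a) (Z d) * rcomm (Y c) (Z b).
Proof. by rewrite commYZ_exchangeY YZ_YZ_anticommute opprK. Qed.

End Consequences.

Section NatProducts.
Variable R : pzRingType.
Implicit Types F G : nat -> R.

Lemma prod_nat_split1 F G n i0 : (i0 < n)%N ->
  (forall i, (i < n)%N -> i != i0 -> F i = G i) ->
  \prod_(0 <= i < n) F i =
  (\prod_(0 <= i < i0) G i) * (F i0 * \prod_(i0.+1 <= i < n) G i).
Proof.
move=> lt E; rewrite (@big_cat_nat _ _ _ i0) //=; last exact: ltnW.
rewrite (big_ltn lt); congr (_ * (_ * _)); apply: eq_big_nat => i /andP[h1 h2];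
  apply: E; lia.
Qed.

Lemma prod_nat_split2 F G n i0 : (i0.+1 < n)%N ->
  (forall i, (i < n)%N -> i != i0 -> i != i0.+1 -> F i = G i) ->
  \prod_(0 <= i < n) F i =
  (\prod_(0 <= i < i0) G i) * ((F i0 * F i0.+1) * \prod_(i0.+2 <= i < n) G i).
Proof.
move=> lt E; rewrite (@big_cat_nat _ _ _ i0) //=; last lia.
rewrite (@big_ltn _ _ _ i0 n); last lia.
rewrite (big_ltn lt) -[in RHS]mulrA; congr (_ * (_ * (_ * _)));
  apply: eq_big_nat => i /andP[h1 h2]; apply: E; lia.
Qed.

Lemma prod_nat_opp_at1 F G n i0 : (i0 < n)%N ->
  (forall i, (i < n)%N -> i != i0 -> F i = G i) -> F i0 = - G i0 ->
  \prod_(0 <= i < n) F i = - \prod_(0 <= i < n) G i.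
Proof.
move=> lt E E0; rewrite (prod_nat_split1 lt E) (@prod_nat_split1 G G _ _ lt) // E0.
by rewrite mulNr mulrN.
Qed.

Lemma prod_nat_opp_at2 F G n i0 : (i0.+1 < n)%N ->
  (forall i, (i < n)%N -> i != i0 -> i != i0.+1 -> F i = G i) ->
  F i0 * F i0.+1 = - (G i0 * G i0.+1) ->
  \prod_(0 <= i < n) F i = - \prod_(0 <= i < n) G i.
Proof.
move=> lt E E0; rewrite (prod_nat_split2 lt E) (@prod_nat_split2 G G _ _ lt) // E0.
by rewrite mulNr mulrN.
Qed.

Lemma prod_nat_eq_at2 F G n i0 : (i0.+1 < n)%N ->
  (forall i, (i < n)%N -> i != i0 -> i != i0.+1 -> F i = G i) ->
  F i0 * F i0.+1 = G i0 * G i0.+1 ->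
  \prod_(0 <= i < n) F i = \prod_(0 <= i < n) G i.
Proof.
by move=> lt E E0; rewrite (prod_nat_split2 lt E) (@prod_nat_split2 G G _ _ lt) // E0.
Qed.

End NatProducts.

Definition swap_at (f : nat -> nat) (p k : nat) : nat :=
  if k == p then f p.+1 else if k == p.+1 then f p else f k.

Lemma swap_at_other f p k : k != p -> k != p.+1 -> swap_at f p k = f k.
Proof. by rewrite /swap_at => /negbTE -> /negbTE ->. Qed.

Lemma swap_at_l f p : swap_at f p p = f p.+1.
Proof. by rewrite /swap_at eqxx. Qed.

Lemma swap_at_r f p : swap_at f p p.+1 = f p.
Proof. by rewrite /swap_at ifF ?eqxx //; lia. Qed.

Lemma nth_cat_swap (a b : seq nat) x y :
  nth 0%N (a ++ y :: x :: b) =1 swap_at (nth 0%N (a ++ x :: y :: b)) (size a).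
Proof.
move=> k; rewrite /swap_at; case: (ltnP k (size a)) => h.
  by rewrite ifF ?ifF ?nth_cat ?h //; lia.
rewrite -(subnKC h) !nth_cat ltnNge leq_addr /= addKn.
case: (k - size a)%N => [|[|j]]; rewrite ?addn0 ?eqxx.
- by rewrite ltnNge leqnSn /= subSnn.
- by rewrite ifF 1?addn1 ?eqxx ?ltnn ?subnn //; lia.
- by rewrite !ifF ?ltnNge ?leq_addr ?addKn //; lia.
Qed.

Section HPolynomial.
Variable K : fieldType.
Local Notation R := (relfree K).
Local Notation Y := (@Y K).
Local Notation Z := (@Z K).

(* [hval m n r fi fj] is the image of [h] with i-indices [fi 0, fi 1, ...] and
   j-indices [fj 0, fj 1, ...], written as one product of [m + n + r] factors. *)
Definition hfactor (m n : nat) (fi fj : nat -> nat) (i : nat) : R :=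
  if (i < m)%N then rcomm (Y (fi (2 * i)%N)) (Y (fi (2 * i).+1))
  else if (i < m + n)%N then rcomm (Y (fi (m + i)%N)) (Z (fj (i - m)%N))
  else rjordan (Z (fj (2 * i - 2 * m - n)%N)) (Z (fj (2 * i - 2 * m - n).+1)).

Definition hval m n r fi fj : R := \prod_(0 <= i < m + n + r) hfactor m n fi fj i.

Lemma hfactorYY m n fi fj i : (i < m)%N ->
  hfactor m n fi fj i = rcomm (Y (fi (2 * i)%N)) (Y (fi (2 * i).+1)).
Proof. by move=> h; rewrite /hfactor h. Qed.

Lemma hfactorYZ m n fi fj i : (m <= i < m + n)%N ->
  hfactor m n fi fj i = rcomm (Y (fi (m + i)%N)) (Z (fj (i - m)%N)).
Proof. by move=> /andP[h1 h2]; rewrite /hfactor ltnNge h1 /= h2. Qed.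

Lemma hfactorZZ m n fi fj i : (m + n <= i)%N ->
  hfactor m n fi fj i = rjordan (Z (fj (2 * i - 2 * m - n)%N)) (Z (fj (2 * i - 2 * m - n).+1)).
Proof. by move=> h; rewrite /hfactor ifF ?ifF //; lia. Qed.

Lemma eq_hval m n r fi fj fi' fj' :
  (forall k, (k < 2 * m + n)%N -> fi k = fi' k) ->
  (forall k, (k < n + 2 * r)%N -> fj k = fj' k) ->
  hval m n r fi fj = hval m n r fi' fj'.
Proof.
move=> Ei Ej; apply: eq_big_nat => i /andP[_ hi].
case: (ltnP i m) => h1; first by rewrite !hfactorYY // !Ei //; lia.
case: (ltnP i (m + n)) => h2; first by rewrite !hfactorYZ ?Ei ?Ej //; lia.
by rewrite !hfactorZZ // !Ej //; lia.
Qed.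

Lemma hval_split m n r fi fj : hval m n r fi fj =
  (\prod_(0 <= a < m) rcomm (Y (fi (2 * a)%N)) (Y (fi (2 * a).+1))) *
  ((\prod_(0 <= b < n) rcomm (Y (fi (2 * m + b)%N)) (Z (fj b))) *
   (\prod_(0 <= c < r) rjordan (Z (fj (n + 2 * c)%N)) (Z (fj (n + 2 * c).+1)))).
Proof.
rewrite /hval (@big_cat_nat _ _ _ (m + n)) //=; last lia.
rewrite (@big_cat_nat _ _ _ m) //=; last lia.
rewrite -mulrA; congr (_ * (_ * _)).
- by apply: eq_big_nat => i /andP[_ h]; rewrite hfactorYY.
- rewrite -{1}[m]add0n big_addn addKn; apply: eq_big_nat => i /andP[_ h].
  by rewrite hfactorYZ ?addnK; [congr (rcomm (Y (fi _)) _) | ]; lia.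
- rewrite -{1}[(m + n)%N]add0n big_addn (_ : (m + n + r - (m + n) = r)%N); last lia.
  apply: eq_big_nat => i /andP[_ h].
  by rewrite hfactorZZ; [congr (rjordan (Z (fj _)) (Z (fj _))) | ]; lia.
Qed.

Lemma hfactor_swapI_away m n fi fj p i :
  ((i < m)%N -> (p.+1 < 2 * i)%N \/ ((2 * i).+1 < p)%N) ->
  ((m <= i < m + n)%N -> (p.+1 < m + i)%N \/ (m + i < p)%N) ->
  hfactor m n (swap_at fi p) fj i = hfactor m n fi fj i.
Proof.
move=> hYY hYZ; case: (ltnP i m) => h1.
  by rewrite !hfactorYY // !swap_at_other //; lia.
case: (ltnP i (m + n)) => h2; last by rewrite !hfactorZZ.
by rewrite !hfactorYZ ?swap_at_other //; lia.
Qed.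

Lemma hfactor_swapJ_away m n fi fj p i :
  ((m <= i < m + n)%N -> (p.+1 < i - m)%N \/ (i - m < p)%N) ->
  ((m + n <= i)%N -> (p.+1 < 2 * i - 2 * m - n)%N \/ ((2 * i - 2 * m - n).+1 < p)%N) ->
  hfactor m n fi (swap_at fj p) i = hfactor m n fi fj i.
Proof.
move=> hYZ hZZ; case: (ltnP i m) => h1; first by rewrite !hfactorYY.
case: (ltnP i (m + n)) => h2; first by rewrite !hfactorYZ ?swap_at_other //; lia.
by rewrite !hfactorZZ // !swap_at_other //; lia.
Qed.

End HPolynomial.

Section HSwaps.
Variable K : fieldType.
Local Notation hval := (@hval K).

Lemma hval_swapI_insideYY m n r fi fj a : (a < m)%N ->
  hval m n r (swap_at fi (2 * a)) fj = - hval m n r fi fj.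
Proof.
move=> ha; apply: (@prod_nat_opp_at1 _ _ _ _ a); first lia.
  by move=> i hi ne; apply: hfactor_swapI_away; lia.
by rewrite !(hfactorYY _ _ _ _ ha) swap_at_l swap_at_r rcommN.
Qed.

Lemma hval_swapI_acrossYY m n r fi fj a : ((2 * a).+2 < 2 * m + n)%N -> (a < m)%N ->
  hval m n r (swap_at fi (2 * a).+1) fj = - hval m n r fi fj.
Proof.
move=> hp ha; apply: (@prod_nat_opp_at2 _ _ _ _ a); first lia.
  by move=> i hi ne ne1; apply: hfactor_swapI_away; lia.
rewrite !(hfactorYY _ _ _ _ ha) swap_at_l (@swap_at_other fi _ (2 * a)); try lia.
have [h|em] := ltnP a.+1 m.
  have e : (2 * a.+1)%N = (2 * a).+2 by lia.
  rewrite !(hfactorYY _ _ _ _ h) e swap_at_r (@swap_at_other fi _ (2 * a).+3).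
  - exact: commYY_exchange.
  - lia.
  - lia.
have h : (m <= a.+1 < m + n)%N by lia.
have e : (m + a.+1)%N = (2 * a).+2 by lia.
by rewrite !(hfactorYZ _ _ _ h) e swap_at_r commYY_YZ_exchange.
Qed.

Lemma hval_swapI_acrossYZ m n r fi fj i0 : (m <= i0)%N -> (m + i0.+1 < 2 * m + n)%N ->
  hval m n r (swap_at fi (m + i0)) fj = - hval m n r fi fj.
Proof.
move=> h1 h2; apply: (@prod_nat_opp_at2 _ _ _ _ i0); first lia.
  by move=> i hi ne ne1; apply: hfactor_swapI_away; lia.
have hi0 : (m <= i0 < m + n)%N by lia.
have hi1 : (m <= i0.+1 < m + n)%N by lia.
rewrite !(hfactorYZ _ _ _ hi0) !(hfactorYZ _ _ _ hi1) addnS swap_at_l swap_at_r.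
by rewrite subSn // commYZ_exchangeY.
Qed.

Lemma hval_swapI m n r fi fj p : (p.+1 < 2 * m + n)%N ->
  hval m n r (swap_at fi p) fj = - hval m n r fi fj.
Proof.
move=> hp; case: (ltnP p (2 * m)) => hpm; last first.
  have e : p = (m + (p - m))%N by lia.
  by rewrite e hval_swapI_acrossYZ //; lia.
pose a := p./2.
have [e|e] : p = (2 * a)%N \/ p = (2 * a).+1 by rewrite /a; lia.
  by rewrite e hval_swapI_insideYY //; lia.
by rewrite e hval_swapI_acrossYY //; lia.
Qed.

Lemma hval_swapJ_withinYZ m n r fi fj p : (p.+1 < n)%N ->
  hval m n r fi (swap_at fj p) = hval m n r fi fj.
Proof.
move=> hp; apply: (@prod_nat_eq_at2 _ _ _ _ (m + p)%N); first lia.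
  by move=> i hi ne ne1; apply: hfactor_swapJ_away; lia.
have h1 : (m <= m + p < m + n)%N by lia.
have h2 : (m <= (m + p).+1 < m + n)%N by lia.
rewrite !(hfactorYZ _ _ _ h1) !(hfactorYZ _ _ _ h2) -addnS !addKn.
by rewrite swap_at_l swap_at_r commYZ_exchangeZ.
Qed.

Lemma hval_swapJ_acrossYZ m n r fi fj p : p.+1 = n -> (p.+1 < n + 2 * r)%N ->
  hval m n r fi (swap_at fj p) = hval m n r fi fj.
Proof.
move=> ep hp; apply: (@prod_nat_eq_at2 _ _ _ _ (m + p)%N); first lia.
  by move=> i hi ne ne1; apply: hfactor_swapJ_away; lia.
have h1 : (m <= m + p < m + n)%N by lia.
have h2 : (m + n <= (m + p).+1)%N by lia.
have e2 : (2 * (m + p).+1 - 2 * m - n)%N = p.+1 by lia.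
rewrite !(hfactorYZ _ _ _ h1) !(hfactorZZ _ _ _ h2) e2 addKn swap_at_l swap_at_r.
by rewrite swap_at_other 1?commYZ_jordan_exchange //; lia.
Qed.

Lemma hval_swapJ_insideZZ m n r fi fj c : (n + 2 * c < n + 2 * r)%N ->
  hval m n r fi (swap_at fj (n + 2 * c)) = hval m n r fi fj.
Proof.
move=> hc; apply: eq_big_nat => i /andP[_ hi].
have [->|ne] := eqVneq i (m + n + c)%N; last by apply: hfactor_swapJ_away; lia.
have h : (m + n <= m + n + c)%N by lia.
have e : (2 * (m + n + c) - 2 * m - n)%N = (n + 2 * c)%N by lia.
by rewrite !(hfactorZZ _ _ _ h) e swap_at_l swap_at_r rjordanC.
Qed.

Lemma hval_swapJ_acrossZZ m n r fi fj c : ((n + 2 * c).+2 < n + 2 * r)%N ->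
  hval m n r fi (swap_at fj (n + 2 * c).+1) = hval m n r fi fj.
Proof.
move=> hc; apply: (@prod_nat_eq_at2 _ _ _ _ (m + n + c)%N); first lia.
  by move=> i hi ne ne1; apply: hfactor_swapJ_away; lia.
have h1 : (m + n <= m + n + c)%N by lia.
have h2 : (m + n <= (m + n + c).+1)%N by lia.
have e1 : (2 * (m + n + c) - 2 * m - n)%N = (n + 2 * c)%N by lia.
have e2 : (2 * (m + n + c).+1 - 2 * m - n)%N = (n + 2 * c).+2 by lia.
rewrite !(hfactorZZ _ _ _ h1) !(hfactorZZ _ _ _ h2) e1 e2 swap_at_l swap_at_r.
rewrite (@swap_at_other fj _ (n + 2 * c)) ?(@swap_at_other fj _ (n + 2 * c).+3); try lia.
exact: jordanZZ_exchange.
Qed.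

Lemma hval_swapJ m n r fi fj p : (p.+1 < n + 2 * r)%N ->
  hval m n r fi (swap_at fj p) = hval m n r fi fj.
Proof.
move=> hp; case: (ltngtP p.+1 n) => hpn.
- exact: hval_swapJ_withinYZ.
- pose c := (p - n)./2.
  have [e|e] : p = (n + 2 * c)%N \/ p = (n + 2 * c).+1 by rewrite /c; lia.
    by rewrite e hval_swapJ_insideZZ //; lia.
  by rewrite e hval_swapJ_acrossZZ //; lia.
- exact: hval_swapJ_acrossYZ.
Qed.

End HSwaps.

Lemma perm_swap_head (T : eqType) (x y : T) t : perm_eq (x :: y :: t) (y :: x :: t).
Proof. by apply/permP => p /=; rewrite addnCA. Qed.

Section AlternatingSort.
Variables (K : fieldType) (V : lmodType K).
Hypothesis two_neq0 : (2%:R : K) != 0.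

Lemma self_opp_eq0 (a : V) : a = - a -> a = 0.
Proof.
move=> h; have h2 : (2%:R : K) *: a = 0.
  by rewrite -[2%:R]/(1 + 1) scalerDl scale1r {1}h addNr.
by rewrite -[a]scale1r -(mulVf two_neq0) -scalerA h2 scaler0.
Qed.

Variables (F : seq nat -> V) (L : nat).
Hypothesis F_swap : forall a x y b, size (a ++ x :: y :: b) = L ->
  F (a ++ y :: x :: b) = - F (a ++ x :: y :: b).

(* A repeated index forces [F] to vanish, since char K <> 2. *)
Lemma alternating_insert b : forall a x, sorted ltn b -> size (a ++ x :: b) = L ->
  F (a ++ x :: b) = 0 \/ exists c b', F (a ++ x :: b) = c *: F (a ++ b') /\
     sorted ltn b' /\ perm_eq (x :: b) b'.
Proof.
elim: b => [|y t IH] a x sb hs; first by right; exists 1, [:: x]; rewrite scale1r.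
case: (ltngtP x y) => hxy.
- by right; exists 1, [:: x, y & t]; rewrite scale1r /= hxy.
- have hs' : size (rcons a y ++ x :: t) = L.
    by move: hs; rewrite !size_cat /= size_rcons addnS.
  have st : sorted ltn t by move: sb => /= /path_sorted.
  have hsw : size (a ++ y :: x :: t) = L by move: hs; rewrite !size_cat.
  rewrite (F_swap hsw).
  have := IH (rcons a y) x st hs'; rewrite cat_rcons => -[h0|[c [b' [E [sb' pb']]]]].
    by left; rewrite h0 oppr0.
  right; exists (- c), (y :: b'); split; first by rewrite E cat_rcons scaleNr.
  split; last by rewrite (perm_trans (perm_swap_head _ _ _)) // perm_cons.
  rewrite /= (path_sortedE ltn_trans) sb' andbT -(perm_all _ pb') /= hxy /=.
  by move: sb; rewrite /= (path_sortedE ltn_trans) => /andP[].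
- by left; subst y; apply: self_opp_eq0; exact: F_swap.
Qed.

Lemma alternating_sort_suffix b : forall a, size (a ++ b) = L ->
  F (a ++ b) = 0 \/ exists c b', F (a ++ b) = c *: F (a ++ b') /\
     sorted ltn b' /\ perm_eq b b'.
Proof.
elim: b => [|x t IH] a hs; first by right; exists 1, [::]; rewrite scale1r.
have hs' : size (rcons a x ++ t) = L by rewrite cat_rcons.
have := IH _ hs'; rewrite !cat_rcons => -[h0|[c [t' [E [st pt]]]]]; first by left.
rewrite cat_rcons in E.
have hs2 : size (a ++ x :: t') = L by move: hs; rewrite !size_cat /= (perm_size pt).
have [h0|[c' [b' [E' [sb pb]]]]] := alternating_insert st hs2.
  by left; rewrite E h0 scaler0.
right; exists (c * c'), b'; split; first by rewrite E E' scalerA.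
by split=> //; apply: perm_trans pb; rewrite perm_cons.
Qed.

Lemma alternating_sort s : size s = L ->
  F s = 0 \/ exists c s', F s = c *: F s' /\ sorted ltn s' /\ size s' = L.
Proof.
move=> hs; have [|[c [s' [E [ss ps]]]]] := @alternating_sort_suffix s [::] hs; first by left.
by right; exists c, s'; do !split => //; rewrite -(perm_size ps).
Qed.

End AlternatingSort.

Section SymmetricSort.
Variables (T : Type) (F : seq nat -> T) (L : nat).
Hypothesis F_swap : forall a x y b, size (a ++ x :: y :: b) = L ->
  F (a ++ y :: x :: b) = F (a ++ x :: y :: b).

Lemma symmetric_insert b : forall a x, sorted leq b -> size (a ++ x :: b) = L ->
  exists b', F (a ++ x :: b) = F (a ++ b') /\ sorted leq b' /\ perm_eq (x :: b) b'.
Proof.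
elim: b => [|y t IH] a x sb hs; first by exists [:: x].
case: (leqP x y) => hxy; first by exists [:: x, y & t]; rewrite /= hxy.
have hs' : size (rcons a y ++ x :: t) = L.
  by move: hs; rewrite !size_cat /= size_rcons addnS.
have st : sorted leq t by move: sb => /= /path_sorted.
have := IH (rcons a y) x st hs'; rewrite cat_rcons => -[b' [E [sb' pb']]].
exists (y :: b'); split.
  have hsw : size (a ++ y :: x :: t) = L by move: hs; rewrite !size_cat.
  by rewrite (F_swap hsw) E cat_rcons.
split; last by rewrite (perm_trans (perm_swap_head _ _ _)) // perm_cons.
rewrite /= (path_sortedE leq_trans) sb' andbT -(perm_all _ pb') /= (ltnW hxy) /=.
by move: sb; rewrite /= (path_sortedE leq_trans) => /andP[].
Qed.

Lemma symmetric_sort_suffix b : forall a, size (a ++ b) = L ->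
  exists b', F (a ++ b) = F (a ++ b') /\ sorted leq b' /\ perm_eq b b'.
Proof.
elim: b => [|x t IH] a hs; first by exists [::].
have hs' : size (rcons a x ++ t) = L by rewrite cat_rcons.
have := IH _ hs'; rewrite !cat_rcons => -[t' [E [st pt]]]; rewrite cat_rcons in E.
have hs2 : size (a ++ x :: t') = L by move: hs; rewrite !size_cat /= (perm_size pt).
have [b' [E' [sb pb]]] := symmetric_insert st hs2.
exists b'; split; first by rewrite E E'.
by split=> //; apply: perm_trans pb; rewrite perm_cons.
Qed.

Lemma symmetric_sort s : size s = L ->
  exists s', F s = F s' /\ sorted leq s' /\ size s' = L.
Proof.
move=> hs; have [s' [E [ss ps]]] := @symmetric_sort_suffix s [::] hs.
by exists s'; do !split => //; rewrite -(perm_size ps).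
Qed.

End SymmetricSort.

Section GSpan.
Variable K : fieldType.
Hypothesis two_neq0 : (2%:R : K) != 0.
Local Notation R := (relfree K).
Local Notation Y := (@Y K).
Local Notation Z := (@Z K).
Local Notation hval := (@hval K).

Definition zword (ks : seq nat) : R := \prod_(k <- ks) Z k.

Definition gval (d : gdata) : R :=
  hval (gm d) (gn d) (gr d) (nth 0%N (gi d)) (nth 0%N (gj d)) * zword (gk d).

Lemma rproj_gK d : rproj (gK K d) = gval d.
Proof.
rewrite /gK /hpoly /gval /zword !rprojM !rproj_pprod !big_map hval_split.
rewrite /index_iota !subn0.
under eq_bigr => a _ do rewrite rproj_comm.
under [X in _ * (X * _) * _]eq_bigr => a _ do rewrite rproj_comm.
by under [X in _ * (_ * X) * _]eq_bigr => a _ do rewrite rproj_jordan.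
Qed.

Inductive gspan : R -> Prop :=
| gspan0 : gspan 0
| gspanD a b : gspan a -> gspan b -> gspan (a + b)
| gspanZ c a : gspan a -> gspan (c *: a)
| gspan_gval d : admissible d -> gspan (gval d).

Lemma hval_consYY m n r ii fj a b : rcomm (Y a) (Y b) * hval m n r (nth 0%N ii) fj =
  hval m.+1 n r (nth 0%N [:: a, b & ii]) fj.
Proof.
rewrite !hval_split big_nat_recl // muln0 -mulrA; congr (_ * (_ * (_ * _))).
- by apply: eq_big_nat => i _; rewrite (_ : (2 * i.+1)%N = (2 * i).+2) //; lia.
- by apply: eq_big_nat => i _; rewrite (_ : (2 * m.+1 + i)%N = (2 * m + i).+2) //; lia.
Qed.

(* The new [y,z] factor commutes past the [y,y] block. *)
Lemma hval_consYZ m n r ii js a b : (2 * m <= size ii)%N ->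
  rcomm (Y a) (Z b) * hval m n r (nth 0%N ii) (nth 0%N js) =
  hval m n.+1 r (nth 0%N (take (2 * m) ii ++ a :: drop (2 * m) ii)) (nth 0%N (b :: js)).
Proof.
move=> hs; rewrite !hval_split big_nat_recl //.
have hst : size (take (2 * m) ii) = (2 * m)%N by rewrite size_takel.
have C : GRing.comm (rcomm (Y a) (Z b))
   (\prod_(0 <= i < m) rcomm (Y (nth 0%N ii (2 * i)%N)) (Y (nth 0%N ii (2 * i).+1))).
  by apply: commr_prod => i _; apply: commr_sym; apply: YY_YZ_commute.
rewrite mulrA C -!mulrA; congr (_ * (_ * (_ * _))).
- apply: eq_big_nat => i /andP[_ h].
  by rewrite !nth_cat hst ifT ?ifT ?nth_take //; lia.
- by rewrite addn0 nth_cat hst ltnn subnn.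
- apply: eq_big_nat => i _; rewrite nth_cat hst ifF; last lia.
  by rewrite (_ : (2 * m + i.+1 - 2 * m)%N = i.+1) /= ?nth_drop //; lia.
Qed.

Lemma hval_rconsZZ m n r fi js u v : size js = (n + 2 * r)%N ->
  hval m n r fi (nth 0%N js) * rjordan (Z u) (Z v) =
  hval m n r.+1 fi (nth 0%N (js ++ [:: u; v])).
Proof.
move=> hs; rewrite !hval_split big_nat_recr //= -!mulrA; congr (_ * (_ * _)).
  by apply: eq_big_nat => i /andP[_ h]; rewrite nth_cat ifT //; lia.
congr (_ * _).
  by apply: eq_big_nat => i /andP[_ h]; rewrite !nth_cat ifT ?ifT //; lia.
by rewrite !nth_cat hs ltnn subnn ifF ?subSn ?subnn //; lia.
Qed.

Lemma hval_swapI_nth m n r js a x y b : size (a ++ x :: y :: b) = (2 * m + n)%N ->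
  hval m n r (nth 0%N (a ++ y :: x :: b)) (nth 0%N js) =
  - hval m n r (nth 0%N (a ++ x :: y :: b)) (nth 0%N js).
Proof.
move=> hs; rewrite -(@hval_swapI _ m n r _ _ (size a)); last by move: hs; rewrite size_cat /=; lia.
by apply: eq_hval => k _ //; apply: nth_cat_swap.
Qed.

Lemma hval_swapJ_nth m n r fi a x y b : size (a ++ x :: y :: b) = (n + 2 * r)%N ->
  hval m n r fi (nth 0%N (a ++ y :: x :: b)) = hval m n r fi (nth 0%N (a ++ x :: y :: b)).
Proof.
move=> hs; rewrite -[RHS](@hval_swapJ _ m n r fi _ (size a)); last by move: hs; rewrite size_cat /=; lia.
by apply: eq_hval => k _ //; apply: nth_cat_swap.
Qed.

Lemma gspan_sortJ m n r ii js ks : size ii = (2 * m + n)%N -> sorted ltn ii ->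
  size js = (n + 2 * r)%N -> sorted ltn ks ->
  gspan (hval m n r (nth 0%N ii) (nth 0%N js) * zword ks).
Proof.
move=> hi si hj sk.
pose F s := hval m n r (nth 0%N ii) (nth 0%N s) * zword ks.
have F_swap a x y b : size (a ++ x :: y :: b) = (n + 2 * r)%N ->
    F (a ++ y :: x :: b) = F (a ++ x :: y :: b).
  by move=> h; rewrite /F hval_swapJ_nth.
have [s' [E [ss sz]]] := symmetric_sort F_swap hj.
by rewrite -/(F js) E; apply: (@gspan_gval (GData m n r (size ks) ii s' ks)).
Qed.

Lemma gspan_sort m n r ii js ks : size ii = (2 * m + n)%N ->
  size js = (n + 2 * r)%N -> sorted ltn ks ->
  gspan (hval m n r (nth 0%N ii) (nth 0%N js) * zword ks).
Proof.
move=> hi hj sk.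
pose F s := hval m n r (nth 0%N s) (nth 0%N js) * zword ks.
have F_swap a x y b : size (a ++ x :: y :: b) = (2 * m + n)%N ->
    F (a ++ y :: x :: b) = - F (a ++ x :: y :: b).
  by move=> h; rewrite /F hval_swapI_nth // mulNr.
have [h0|[c [s' [E [ss sz]]]]] := alternating_sort two_neq0 F_swap hi.
  by rewrite -/(F ii) h0; apply: gspan0.
by rewrite -/(F ii) E; apply/gspanZ/gspan_sortJ.
Qed.

Lemma gspan_mulYY d a b : admissible d -> gspan (rcomm (Y a) (Y b) * gval d).
Proof.
case: d => m n r q ii js ks [/= si [_ [sj [_ [_ ssk]]]]].
by rewrite /gval /= mulrA hval_consYY; apply: gspan_sort => //=; rewrite si; lia.
Qed.

Lemma gspan_mulYZ d a b : admissible d -> gspan (rcomm (Y a) (Z b) * gval d).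
Proof.
case: d => m n r q ii js ks [/= si [_ [sj [_ [_ ssk]]]]].
rewrite /gval /= mulrA hval_consYZ; last by rewrite si; lia.
apply: gspan_sort => //=; last by rewrite sj; lia.
by rewrite size_cat size_takel /= ?size_drop ?si; lia.
Qed.

End GSpan.

Section MulZ.
Variable K : fieldType.
Hypothesis two_neq0 : (2%:R : K) != 0.
Local Notation R := (relfree K).
Local Notation Y := (@Y K).
Local Notation Z := (@Z K).
Local Notation hval := (@hval K).
Local Notation zword := (@zword K).
Local Notation gspan := (@gspan K).
Local Notation gval := (@gval K).

Lemma mul_prod_anticomm (x : R) (F : nat -> R) n : (forall i, x * F i = - (F i * x)) ->
  x * \prod_(0 <= i < n) F i = ((-1) ^+ n : K) *: (\prod_(0 <= i < n) F i * x).
Proof.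
move=> h; elim: n => [|n IH]; first by rewrite big_geq // mulr1 mul1r expr0 scale1r.
rewrite !big_nat_recr //= mulrA IH -rscalerAl -!mulrA h mulrN exprS mulN1r scaleNr.
by rewrite scalerN.
Qed.

(* Only the [n] factors [y,z] anticommute with [z]. *)
Lemma Z_hval c m n r fi fj :
  Z c * hval m n r fi fj = ((-1) ^+ n : K) *: (hval m n r fi fj * Z c).
Proof.
rewrite !hval_split.
set YY := \prod_(0 <= a < m) _; set YZ := \prod_(0 <= b < n) _; set ZZ := \prod_(0 <= c < r) _.
have cYY : GRing.comm (Z c) YY.
  by apply: commr_prod => i _; apply: commr_sym; rewrite /GRing.comm YY_Z_commute.
have cYZ : Z c * YZ = ((-1) ^+ n : K) *: (YZ * Z c).
  by apply: mul_prod_anticomm => i; rewrite YZ_Z_anticommute opprK.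
have cZZ : GRing.comm (Z c) ZZ.
  by apply: commr_prod => i _; apply: commr_sym; rewrite /GRing.comm ZZ_Z_commute.
rewrite mulrA cYY -mulrA [Z c * (YZ * ZZ)]mulrA cYZ -rscalerAl -rscalerAr.
by rewrite -[YZ * Z c * ZZ]mulrA cZZ -!mulrA.
Qed.

Lemma zword_cons k ks : zword (k :: ks) = Z k * zword ks.
Proof. by rewrite /zword big_cons. Qed.

Lemma Z_mulZ c : Z c * Z c = (2%:R : K)^-1 *: rjordan (Z c) (Z c).
Proof.
have e : Z c * Z c + Z c * Z c = (2%:R : K) *: (Z c * Z c).
  by rewrite -[2%:R]/(1 + 1 : K) scalerDl scale1r.
by rewrite /rjordan e scalerA mulVf // scale1r.
Qed.

Inductive zspan (P : pred nat) : R -> Prop :=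
| zspan0 : zspan P 0
| zspanD a b : zspan P a -> zspan P b -> zspan P (a + b)
| zspanZ (c : K) a : zspan P a -> zspan P (c *: a)
| zspan_word ks : sorted ltn ks -> all P ks -> zspan P (zword ks)
| zspan_jordan u v ks : sorted ltn ks -> all P ks -> zspan P (rjordan (Z u) (Z v) * zword ks).

Lemma zspan_mulZ_lt (P : pred nat) k x : P k ->
  zspan (fun e => (k < e)%N && P e) x -> zspan P (Z k * x).
Proof.
move=> Pk; have cons_ok ks : sorted ltn ks -> all (fun e => (k < e)%N && P e) ks ->
    sorted ltn (k :: ks) && all P (k :: ks).
  move=> sks aks; rewrite /= (path_sortedE ltn_trans) sks Pk andbT.
  by apply/andP; split; apply: sub_all aks => e /andP[].
elim=> [|a b _ IHa _ IHb|c a _ IHa|ks sks aks|u v ks sks aks].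
- by rewrite mulr0; apply: zspan0.
- by rewrite mulrDr; apply: zspanD.
- by rewrite -rscalerAr; apply: zspanZ.
- by rewrite -zword_cons; have /andP[] := cons_ok _ sks aks; apply: zspan_word.
- rewrite mulrA -ZZ_Z_commute -mulrA -zword_cons.
  by have /andP[] := cons_ok _ sks aks; apply: zspan_jordan.
Qed.

Lemma zspan_mulZ ks : forall c (P : pred nat), sorted ltn ks -> P c -> all P ks ->
  zspan P (Z c * zword ks).
Proof.
elim: ks => [|k t IH] c P sks Pc aks.
  by rewrite -zword_cons; apply: zspan_word => //=; rewrite Pc.
rewrite zword_cons.
have st : sorted ltn t by move: sks => /= /path_sorted.
have akt : all (fun e => (k < e)%N) t.
  by move: sks; rewrite /= (path_sortedE ltn_trans) => /andP[].
move: aks => /= /andP[Pk aPt].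
case: (ltngtP c k) => hck.
- rewrite -!zword_cons; apply: zspan_word; last by rewrite /= Pc Pk.
  by rewrite /= hck /= (path_sortedE ltn_trans) akt.
- rewrite mulrA (_ : Z c * Z k = rjordan (Z c) (Z k) - Z k * Z c); last by rewrite addrK.
  rewrite mulrBl -mulrA -scaleN1r; apply: zspanD; first exact: zspan_jordan.
  apply/zspanZ/zspan_mulZ_lt => //; apply: IH; rewrite ?hck //.
  by rewrite all_predI akt.
- by subst c; rewrite mulrA Z_mulZ // -rscalerAl; apply/zspanZ/zspan_jordan.
Qed.

Lemma gspan_hval_mul m n r ii js x : size ii = (2 * m + n)%N -> sorted ltn ii ->
  size js = (n + 2 * r)%N -> zspan predT x ->
  gspan (hval m n r (nth 0%N ii) (nth 0%N js) * x).
Proof.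
move=> si ssi sj; elim=> [|a b _ IHa _ IHb|c a _ IHa|ks sks _|u v ks sks _].
- by rewrite mulr0; apply: gspan0.
- by rewrite mulrDr; apply: gspanD.
- by rewrite -rscalerAr; apply: gspanZ.
- exact: gspan_sort.
- rewrite mulrA hval_rconsZZ //; apply: gspan_sortJ => //.
  by rewrite size_cat sj /=; lia.
Qed.

Lemma gspan_mulZ d c : admissible d -> gspan (Z c * gval d).
Proof.
case: d => m n r q ii js ks [/= si [ssi [sj [_ [_ ssk]]]]].
rewrite /gval /= mulrA Z_hval -rscalerAl -mulrA; apply: gspanZ.
by apply: gspan_hval_mul => //; apply: zspan_mulZ => //; apply/allP.
Qed.

End MulZ.

Section YProper.
Variable K : fieldType.
Hypothesis two_neq0 : (2%:R : K) != 0.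
Local Notation R := (relfree K).
Local Notation Y := (@Y K).
Local Notation Z := (@Z K).
Local Notation gspan := (@gspan K).
Local Notation gval := (@gval K).

Definition X (x : var) : R := rproj (pvar K x).

Inductive generator : R -> Prop :=
| generatorZ c : generator (Z c)
| generatorYY a b : generator (rcomm (Y a) (Y b))
| generatorYZ a b : generator (rcomm (Y a) (Z b)).

Inductive genalg : R -> Prop :=
| genalg0 : genalg 0
| genalg1 : genalg 1
| genalgD a b : genalg a -> genalg b -> genalg (a + b)
| genalgZ (c : K) a : genalg a -> genalg (c *: a)
| genalg_mulg g a : generator g -> genalg a -> genalg (g * a).

Lemma genalgM a b : genalg a -> genalg b -> genalg (a * b).
Proof.
move=> ha hb; elim: ha => [|||c x _ IH|g x hg _ IH].
- by rewrite mul0r; apply: genalg0.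
- by rewrite mul1r.
- by move=> x x' _ IH _ IH'; rewrite mulrDl; apply: genalgD.
- by rewrite -rscalerAl; apply: genalgZ.
- by rewrite -mulrA; apply: genalg_mulg.
Qed.

Lemma genalg_generator g : generator g -> genalg g.
Proof. by move=> h; rewrite -[g]mulr1; apply/genalg_mulg/genalg1. Qed.

Lemma genalgB a b : genalg a -> genalg b -> genalg (a - b).
Proof. by move=> ha hb; rewrite -scaleN1r; apply/genalgD/genalgZ. Qed.

Lemma rcommMl (g x v : R) : rcomm (g * x) v = g * rcomm x v + rcomm g v * x.
Proof. by rewrite /rcomm mulrBr mulrBl !mulrA addrA subrK. Qed.

Lemma rcomm_generator g v : generator g -> genalg (rcomm g (X v)).
Proof.
have gZ c : genalg (Z c) by apply/genalg_generator/generatorZ.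
have gYZ a b : genalg (rcomm (Y a) (Z b)) by apply/genalg_generator/generatorYZ.
have XZ i : X (true, i) = Z i by [].
have XY i : X (false, i) = Y i by [].
case: v => [[] i] [c|a b|a b]; rewrite ?XZ ?XY.
- by apply: genalgB; apply: genalgM; apply: gZ.
- by rewrite commYY_Z; apply: genalg0.
- have gZYZ : genalg (Z i * rcomm (Y a) (Z b)) by apply: genalgM.
  by rewrite /rcomm YZ_Z_anticommute -opprD -scaleN1r; apply/genalgZ/genalgD.
- by rewrite rcommN -scaleN1r; apply/genalgZ/gYZ.
- by rewrite commYY_Y; apply: genalg0.
- by rewrite commYZ_Y; apply: genalg0.
Qed.

Lemma rcomm_genalg x v : genalg x -> genalg (rcomm x (X v)).
Proof.
elim=> [|||c a _ IHa|g a hg ha IHa].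
- by rewrite /rcomm mul0r mulr0 subrr; apply: genalg0.
- by rewrite /rcomm mul1r mulr1 subrr; apply: genalg0.
- move=> a b _ IHa _ IHb; rewrite (_ : rcomm (a + b) _ = rcomm a (X v) + rcomm b (X v)).
    exact: genalgD.
  by rewrite /rcomm mulrDl mulrDr opprD addrACA.
- rewrite (_ : rcomm (c *: a) _ = c *: rcomm a (X v)); first exact: genalgZ.
  by rewrite /rcomm -rscalerAl -rscalerAr scalerBr.
- rewrite rcommMl; apply: genalgD; first exact: genalg_mulg.
  exact: genalgM (rcomm_generator v hg) ha.
Qed.

Lemma genalg_lcomm x xs : (1 <= size xs)%N -> genalg (rproj (lcomm K x xs)).
Proof.
case: xs => [//|v t] _; rewrite /lcomm /=.
suff comm_iter p : genalg (rproj p) ->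
    genalg (rproj (foldl (fun a b => comm a (pvar K b)) p t)).
  apply/comm_iter; rewrite rproj_comm; case: x => [[] a].
  - exact/rcomm_genalg/genalg_generator/generatorZ.
  - case: v => [[] b]; first exact/genalg_generator/generatorYZ.
    exact/genalg_generator/generatorYY.
elim: t p => [|w t IH] p hp //=; apply: IH.
by rewrite rproj_comm; apply: rcomm_genalg.
Qed.

Lemma genalg_Yproper f : Yproper f -> genalg (rproj f).
Proof.
elim=> {f} [|i|x xs h|p q _ h e|p q _ hp _ hq|c p _ h|p q _ hp _ hq].
- exact: genalg1.
- exact/genalg_generator/generatorZ.
- exact: genalg_lcomm.
- by rewrite -(rproj_peq e).
- by rewrite rprojD; apply: genalgD.
- by rewrite rprojZ; apply: genalgZ.
- by rewrite rprojM; apply: genalgM.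
Qed.

Lemma gspan_mul_generator g x : generator g -> gspan x -> gspan (g * x).
Proof.
move=> hg; elim=> [|a b _ IHa _ IHb|c a _ IHa|d hd].
- by rewrite mulr0; apply: gspan0.
- by rewrite mulrDr; apply: gspanD.
- by rewrite -rscalerAr; apply: gspanZ.
- case: hg => [c|a b|a b].
  + exact: gspan_mulZ.
  + exact: gspan_mulYY.
  + exact: gspan_mulYZ.
Qed.

Lemma gspan_genalg x : genalg x -> gspan x.
Proof.
elim=> [||a b _ IHa _ IHb|c a _ IHa|g a hg _ IHa].
- exact: gspan0.
- have -> : (1 : R) = gval (GData 0 0 0 0 [::] [::] [::]).
    by rewrite /gval /hval big_geq // /zword big_nil mulr1.
  by apply: gspan_gval; do !split.
- exact: gspanD.
- exact: gspanZ.
- exact: gspan_mul_generator.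
Qed.

Lemma gspan_sum x : gspan x -> exists s : seq (K * gdata),
  (forall t, List.In t s -> admissible t.2) /\ x = \sum_(t <- s) t.1 *: gval t.2.
Proof.
elim=> [|a b _ [s1 [h1 e1]] _ [s2 [h2 e2]]|c a _ [s [h e]]|d hd].
- by exists [::]; rewrite big_nil.
- exists (s1 ++ s2); split; last by rewrite big_cat e1 e2.
  by move=> t /(List.in_app_or s1 s2)[]; [apply: h1 | apply: h2].
- exists [seq (c * t.1, t.2) | t <- s]; split.
    by move=> t /(List.in_map_iff _ s)[t0 [<- ht0]]; exact: h ht0.
  by rewrite e big_map scaler_sumr; apply: eq_bigr => t _; rewrite scalerA.
- exists [:: (1, d)]; split; first by move=> t [<-|[]].
  by rewrite big_cons big_nil scale1r addr0.
Qed.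

End YProper.

Theorem mainTheorem5 (K : fieldType)
  (hchar : (2%:R : K) != 0)
  (hinf : forall s : seq K, exists x : K, x \notin s)
  (f : fpoly K) (hf : Yproper f) :
  exists s : seq (K * gdata),
    (forall t, List.In t s -> admissible t.2) /\
    inI (psub f (psum [seq pscale t.1 (gK K t.2) | t <- s])).
Proof.
have [s [adm_s e]] := gspan_sum (gspan_genalg hchar (genalg_Yproper hf)).
exists s; split => //; apply/rproj_eqP.
rewrite e rproj_psum big_map; apply: eq_bigr => t _.
by rewrite rprojZ rproj_gK.
Qed.
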